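(* Let $h\in\mathcal F(X)$. Then $h\diamond(f+g)=h\diamond f+h\diamond g$ holds for all $f,g\in\mathcal F(X)$ if and only if $h$ is skew convex.
   Context: Let $K$ be a skew field, $K^*=K\setminus\{0\}$, and let $X$ be a nonempty set on which $K^*$ acts on the left, written $(a,x)\mapsto{}^{a}x$. $\mathcal F(X)$ is the set of all functions $X\to K$ with pointwise addition; the constant function with value $a\in K$ is denoted $a$. The skew product of $f,g\in\mathcal F(X)$ is $(f\diamond g)(x)=f({}^{g(x)}x)\,g(x)$ if $g(x)\neq0$ and $0$ if $g(x)=0$. A function $f\in\mathcal F(X)$ is skew convex if $f\diamond(a+b)=f\diamond a+f\diamond b$ for all $a,b\in K$ (viewed as constant functions). *)

From mathcomp Require Import all_boot all_algebra.
Set Implicit Arguments. Unset Strict Implicit. Unset Printing Implicit Defensive.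
Import GRing.Theory.
Local Open Scope ring_scope.

(* A skew field K is modelled as a unitRingType (nontrivial ring with
   inverses for units) in which every nonzero element is a unit. *)
Definition skew_field_axiom (K : unitRingType) : Prop :=
  forall a : K, a != 0 -> a \is a GRing.unit.

(* A left action of K^* = K \ {0} on X, given by act : K -> X -> X
   (its values at 0 are irrelevant). *)
Definition left_action_Kstar (K : unitRingType) (X : Type)
  (act : K -> X -> X) : Prop :=
  (forall x, act 1 x = x) /\
  (forall a b x, a != 0 -> b != 0 -> act (a * b) x = act a (act b x)).

Definition fadd (K : unitRingType) (X : Type) (f g : X -> K) : X -> K :=
  fun x => f x + g x.


Definition skew_prod (K : unitRingType) (X : Type) (act : K -> X -> X)
  (f g : X -> K) : X -> K :=
  fun x => if g x == 0 then 0 else f (act (g x) x) * g x.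

Definition skew_convex (K : unitRingType) (X : Type) (act : K -> X -> X)
  (f : X -> K) : Prop :=
  forall a b : K,
    skew_prod act f (fun _ : X => a + b) =
    fadd (skew_prod act f (fun _ : X => a)) (skew_prod act f (fun _ : X => b)).

From mathcomp Require Import all_boot all_algebra.
From Stdlib Require Import FunctionalExtensionality.

(* The key observation is that the skew product is local in its right factor:
   the value of (h <> g) at a point x depends on g only through the scalar
   g(x), so (h <> g)(x) = (h <> c)(x) where c is the constant function g(x).
   Hence the distributive law h <> (f + g) = h <> f + h <> g, checked at a
   point x, is the instance of skew convexity with a = f(x) and b = g(x).
   Conversely skew convexity is the distributive law restricted to constant
   functions. *)

Section SkewProduct.

Variables (K : unitRingType) (X : Type) (act : K -> X -> X) (h : X -> K).

Lemma skew_prod_local (g : X -> K) (x : X) :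
  skew_prod act h g x = skew_prod act h (fun _ => g x) x.
Proof. by []. Qed.

Lemma skew_convex_distr_at (f g : X -> K) (x : X) :
  skew_convex act h ->
  skew_prod act h (fadd f g) x = fadd (skew_prod act h f) (skew_prod act h g) x.
Proof.
move=> convex_h.
rewrite skew_prod_local [LHS](congr1 (fun F => F x) (convex_h (f x) (g x))).
by rewrite /fadd -!skew_prod_local.
Qed.

Lemma skew_convex_distr (f g : X -> K) :
  skew_convex act h ->
  skew_prod act h (fadd f g) = fadd (skew_prod act h f) (skew_prod act h g).
Proof.
by move=> convex_h; apply: functional_extensionality => x;
  exact: skew_convex_distr_at.
Qed.

End SkewProduct.

Theorem lemma2p3 (K : unitRingType) (X : Type) (act : K -> X -> X)
  (HK : skew_field_axiom K) (x0 : X) (Hact : left_action_Kstar act)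
  (h : X -> K) :
  (forall f g : X -> K,
     skew_prod act h (fadd f g) = fadd (skew_prod act h f) (skew_prod act h g))
  <-> skew_convex act h.
Proof.
split=> [distr_h a b | convex_h f g].
- exact: (distr_h (fun _ => a) (fun _ => b)).
- exact: skew_convex_distr.
Qed.
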